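(* Let $(X,\sigma)$ be a metric-like space and $f:X\to X$. Suppose there is a subset $Y$ with $f(X)\subseteq Y\subseteq X$ such that $(Y,\sigma)$ is complete, and there exist $k\in[0,1)$ and $\rho\in\Omega$ such that $$\int_0^{\sigma(fx,fy)}\rho(t)\,dt\le k\int_0^{\sigma(x,y)}\rho(t)\,dt\quad\text{for all }x,y\in X.$$ Then $f$ has a unique fixed point.
   Context: $\Omega$ is the set of all maps $\rho:[0,\infty)\to[0,\infty)$ that are Lebesgue-integrable on each compact subset of $[0,\infty)$ and satisfy $\int_0^\varepsilon\rho(t)\,dt>0$ for all $\varepsilon>0$. A metric-like space is a pair $(X,\sigma)$ with $X\neq\emptyset$ and $\sigma:X\times X\to[0,\infty)$ such that for all $x,y,z\in X$: $\sigma(x,y)=0\Rightarrow x=y$; $\sigma(x,y)=\sigma(y,x)$; $\sigma(x,y)\le\sigma(x,z)+\sigma(z,y)$. A sequence $\{x_n\}$ is Cauchy iff $\lim_{n,m\to\infty}\sigma(x_n,x_m)$ exists and is finite. $(Y,\sigma)$ is complete if every Cauchy sequence $\{x_n\}$ in $Y$ has some $x\in Y$ with $\lim_{n,m}\sigma(x_n,x_m)=\sigma(x,x)=\lim_n\sigma(x_n,x)$. *)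

(* Stdlib has no Lebesgue integral, so we
   define Lebesgue outer measure, Caratheodory measurability and the Lebesgue
   integral of a nonnegative function on [0,a] (via the layer-cake formula,
   as the supremum of lower sums of s |-> lambda({f > s})). *)
From Stdlib Require Import Reals Lra List.
Open Scope R_scope.

(* lambda*(A) <= r : A is covered by countably many open intervals (a n, b n)
   of total length <= r *)
Definition outer_le (A : R -> Prop) (r : R) : Prop :=
  exists a b : nat -> R,
    (forall n, a n <= b n) /\
    (forall x, A x -> exists n, a n < x < b n) /\
    (forall N, sum_f_R0 (fun n => b n - a n) N <= r).

Definition measure_is (A : R -> Prop) (m : R) : Prop :=
  (forall r, outer_le A r -> m <= r) /\
  (forall eps, 0 < eps -> outer_le A (m + eps)).

(* Caratheodory measurability:
   lambda*(T /\ E) + lambda*(T \ E) <= lambda*(T) for every test set T *)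
Definition lebesgue_measurable (E : R -> Prop) : Prop :=
  forall (T : R -> Prop) r, outer_le T r ->
  forall eps, 0 < eps ->
  exists r1 r2, outer_le (fun x => T x /\ E x) r1 /\
                outer_le (fun x => T x /\ ~ E x) r2 /\
                r1 + r2 <= r + eps.

Definition superlevel (f : R -> R) (a s : R) : R -> Prop :=
  fun x => 0 <= x <= a /\ s < f x.

Definition measurable_on (f : R -> R) (a : R) : Prop :=
  forall s, lebesgue_measurable (superlevel f a s).

(* lower_sum f a prev [s1;...;sm] v :
   prev < s1 < ... < sm and v = sum_i (s_i - s_{i-1}) lambda({f > s_i} /\ [0,a]) *)
Inductive lower_sum (f : R -> R) (a : R) : R -> list R -> R -> Prop :=
| ls_nil : forall prev, lower_sum f a prev nil 0
| ls_cons : forall prev s l m v,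
    prev < s ->
    measure_is (superlevel f a s) m ->
    lower_sum f a s l v ->
    lower_sum f a prev (s :: l) ((s - prev) * m + v).

Definition lebesgue_integral_is (f : R -> R) (a I : R) : Prop :=
  measurable_on f a /\
  (forall l v, lower_sum f a 0 l v -> v <= I) /\
  (forall eps, 0 < eps -> exists l v, lower_sum f a 0 l v /\ I - eps < v).

Definition Omega (rho : R -> R) : Prop :=
  (forall t, 0 <= t -> 0 <= rho t) /\
  (forall a, 0 <= a -> exists I, lebesgue_integral_is rho a I) /\
  (forall eps, 0 < eps -> forall I, lebesgue_integral_is rho eps I -> 0 < I).

Definition metric_like (X : Type) (sigma : X -> X -> R) : Prop :=
  inhabited X /\
  (forall x y, 0 <= sigma x y) /\
  (forall x y, sigma x y = 0 -> x = y) /\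
  (forall x y, sigma x y = sigma y x) /\
  (forall x y z, sigma x y <= sigma x z + sigma z y).

Definition double_limit {X : Type} (sigma : X -> X -> R) (x : nat -> X) (L : R) : Prop :=
  forall eps, 0 < eps -> exists N, forall n m, (n >= N)%nat -> (m >= N)%nat ->
    Rabs (sigma (x n) (x m) - L) < eps.

Definition ml_cauchy {X : Type} (sigma : X -> X -> R) (x : nat -> X) : Prop :=
  exists L, double_limit sigma x L.

Definition ml_complete {X : Type} (sigma : X -> X -> R) (Y : X -> Prop) : Prop :=
  forall x : nat -> X, (forall n, Y (x n)) -> ml_cauchy sigma x ->
  exists L p, double_limit sigma x L /\ Y p /\ sigma p p = L /\
              Un_cv (fun n => sigma (x n) p) L.

(* Write F(a) for the integral of rho over [0,a].  F is nondecreasing and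
   positive on (0,oo), and the hypothesis reads F(sigma(fx,fy)) <= k F(sigma(x,y)).
   The only consequences of this needed for a Banach-type argument are:
   (i) sigma(fx,fy) < eps whenever sigma(x,y) <= eps, so a fixed point is unique
   and is the limit of any orbit converging in sigma;
   (ii) iterating, sigma(f^n u, f^n v) -> 0, so consecutive orbit points get close;
   (iii) every interval (0,eps] contains rh < r with k F(r) < F(rh) (otherwise
   F(eps/2) <= k^n F(eps) for all n), and then f maps the sigma-ball of radius r
   around x_N into the ball of radius rh around x_{N+1}; once
   sigma(x_N, x_{N+1}) < r - rh, the whole tail of the orbit stays in the first
   ball.  Hence the orbit is Cauchy with sigma-limit 0, and completeness of Y
   provides the fixed point. *)
From Stdlib Require Import Reals Lra Lia Classical ClassicalEpsilon.
Open Scope R_scope.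

Lemma pow_mul_eventually_lt (k c y : R) :
  0 <= k < 1 -> 0 < y -> exists N, forall n, (n >= N)%nat -> k ^ n * c < y.
Proof.
  intros Hk Hy.
  assert (Hy' : 0 < y / (Rabs c + 1)).
  { apply Rdiv_lt_0_compat; [lra | pose proof (Rabs_pos c); lra]. }
  destruct (pow_lt_1_zero k ltac:(rewrite Rabs_right; lra) _ Hy') as [N HN].
  exists N. intros n Hn. specialize (HN n Hn).
  assert (Hc : 0 <= Rabs c) by apply Rabs_pos.
  assert (Hbound : Rabs (k ^ n) * (Rabs c + 1) < y).
  { apply (Rmult_lt_compat_r (Rabs c + 1)) in HN; [|lra].
    unfold Rdiv in HN. rewrite Rmult_assoc, Rinv_l in HN by lra. lra. }
  apply Rle_lt_trans with (Rabs (k ^ n * c)); [apply Rle_abs|].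
  rewrite Rabs_mult. pose proof (Rabs_pos (k ^ n)). nra.
Qed.

Lemma double_limit_unique {X : Type} (sigma : X -> X -> R) (x : nat -> X) L1 L2 :
  double_limit sigma x L1 -> double_limit sigma x L2 -> L1 = L2.
Proof.
  intros H1 H2. apply NNPP. intro Hne.
  assert (He : 0 < Rabs (L1 - L2) / 2)
    by (pose proof (Rabs_pos_lt (L1 - L2) ltac:(lra)); lra).
  destruct (H1 _ He) as [N1 HN1]. destruct (H2 _ He) as [N2 HN2].
  specialize (HN1 (N1 + N2)%nat (N1 + N2)%nat ltac:(lia) ltac:(lia)).
  specialize (HN2 (N1 + N2)%nat (N1 + N2)%nat ltac:(lia) ltac:(lia)).
  pose proof (Rabs_triang (sigma (x (N1 + N2)%nat) (x (N1 + N2)%nat) - L2)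
                          (-(sigma (x (N1 + N2)%nat) (x (N1 + N2)%nat) - L1))) as Htri.
  rewrite Rabs_Ropp in Htri.
  replace (sigma (x (N1 + N2)%nat) (x (N1 + N2)%nat) - L2
           + - (sigma (x (N1 + N2)%nat) (x (N1 + N2)%nat) - L1)) with (L1 - L2) in Htri
    by ring.
  lra.
Qed.

Section ContractionThroughGauge.

Variables (X : Type) (sigma : X -> X -> R) (f : X -> X) (k : R) (F : R -> R).

Hypothesis sigma_ge0 : forall x y, 0 <= sigma x y.
Hypothesis sigma_eq0 : forall x y, sigma x y = 0 -> x = y.
Hypothesis sigma_sym : forall x y, sigma x y = sigma y x.
Hypothesis sigma_triangle : forall x y z, sigma x y <= sigma x z + sigma z y.
Hypothesis k_range : 0 <= k < 1.
Hypothesis F_mono : forall a b, 0 <= a -> a <= b -> F a <= F b.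
Hypothesis F_pos : forall a, 0 < a -> 0 < F a.
Hypothesis F_contraction : forall x y, F (sigma (f x) (f y)) <= k * F (sigma x y).

Lemma sigma_image_lt_of_gap x y rh r :
  0 < rh -> k * F r < F rh -> sigma x y <= r -> sigma (f x) (f y) < rh.
Proof.
  intros Hrh Hgap Hxy. apply Rnot_le_lt. intro Hge.
  pose proof (F_mono _ _ (Rlt_le _ _ Hrh) Hge).
  pose proof (F_contraction x y).
  assert (k * F (sigma x y) <= k * F r)
    by (apply Rmult_le_compat_l; [lra | apply F_mono; auto]).
  lra.
Qed.

Lemma sigma_image_lt x y eps :
  0 < eps -> sigma x y <= eps -> sigma (f x) (f y) < eps.
Proof.
  intros He Hxy. apply (sigma_image_lt_of_gap x y eps eps He); [|exact Hxy].
  pose proof (F_pos eps He). nra.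
Qed.

Lemma F_sigma_iter_le n u v :
  F (sigma (Nat.iter n f u) (Nat.iter n f v)) <= k ^ n * F (sigma u v).
Proof.
  induction n as [|n IH]; simpl; [lra|].
  pose proof (F_contraction (Nat.iter n f u) (Nat.iter n f v)).
  assert (k * F (sigma (Nat.iter n f u) (Nat.iter n f v)) <= k * (k ^ n * F (sigma u v)))
    by (apply Rmult_le_compat_l; lra).
  lra.
Qed.

Lemma sigma_iter_eventually_lt u v eps :
  0 < eps -> exists N, forall n, (n >= N)%nat ->
    sigma (Nat.iter n f u) (Nat.iter n f v) < eps.
Proof.
  intros He.
  destruct (pow_mul_eventually_lt k (F (sigma u v)) (F eps) k_range (F_pos eps He))
    as [N HN].
  exists N. intros n Hn. apply Rnot_le_lt. intro Hge.
  pose proof (F_mono _ _ (Rlt_le _ _ He) Hge).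
  pose proof (F_sigma_iter_le n u v). specialize (HN n Hn). lra.
Qed.

Lemma contraction_gap eps :
  0 < eps -> exists rh r, 0 < rh /\ rh < r /\ r <= eps /\ k * F r < F rh.
Proof.
  intros He. apply NNPP. intro Hno.
  assert (Hno' : forall rh r, 0 < rh -> rh < r -> r <= eps -> F rh <= k * F r).
  { intros rh r H1 H2 H3. apply Rnot_lt_le. intro Hlt. apply Hno. exists rh, r. auto. }
  assert (Hpow : forall n rh, 0 < rh -> rh < eps -> F rh <= k ^ n * F eps).
  { induction n as [|n IH]; intros rh Hrh Hlt; simpl.
    - rewrite Rmult_1_l. apply F_mono; lra.
    - pose proof (Hno' rh ((rh + eps) / 2) Hrh ltac:(lra) ltac:(lra)).
      pose proof (IH ((rh + eps) / 2) ltac:(lra) ltac:(lra)).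
      assert (k * F ((rh + eps) / 2) <= k * (k ^ n * F eps))
        by (apply Rmult_le_compat_l; lra).
      lra. }
  destruct (pow_mul_eventually_lt k (F eps) (F (eps / 2)) k_range (F_pos (eps / 2) ltac:(lra)))
    as [N HN].
  specialize (HN N (le_n N)). specialize (Hpow N (eps / 2) ltac:(lra) ltac:(lra)).
  lra.
Qed.

Section Orbit.

Variable x : nat -> X.
Hypothesis x_succ : forall n, x (S n) = f (x n).

Lemma orbit_tail_close N rh r :
  0 < rh -> k * F r < F rh -> sigma (x N) (x (S N)) < r - rh ->
  forall j, sigma (x N) (x (S N + j)%nat) < r.
Proof.
  intros Hrh Hgap Hstep. induction j as [|j IH]; [rewrite Nat.add_0_r; lra|].
  replace (S N + S j)%nat with (S (S N + j)) by lia.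
  pose proof (sigma_triangle (x N) (x (S (S N + j))) (x (S N))).
  rewrite !x_succ in *.
  pose proof (sigma_image_lt_of_gap (x N) (x (S N + j)%nat) rh r Hrh Hgap
                                    ltac:(lra)).
  lra.
Qed.

Lemma orbit_double_limit0 :
  (forall eps, 0 < eps -> exists N, forall n, (n >= N)%nat -> sigma (x n) (x (S n)) < eps) ->
  double_limit sigma x 0.
Proof.
  intros Hstep eps He.
  destruct (contraction_gap (eps / 4) ltac:(lra)) as [rh [r [Hrh [Hlt [Hr Hgap]]]]].
  destruct (Hstep (r - rh) ltac:(lra)) as [N HN]. specialize (HN N (le_n N)).
  assert (Hball : forall m, (m >= N)%nat -> sigma (x N) (x m) < 2 * r).
  { intros m Hm. destruct (Nat.eq_dec m N) as [->|Hne].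
    - pose proof (sigma_triangle (x N) (x N) (x (S N))).
      rewrite (sigma_sym (x (S N)) (x N)) in *. lra.
    - replace m with (S N + (m - S N))%nat by lia.
      pose proof (orbit_tail_close N rh r Hrh Hgap HN (m - S N)). lra. }
  exists N. intros n m Hn Hm.
  pose proof (sigma_triangle (x n) (x m) (x N)).
  rewrite (sigma_sym (x n) (x N)) in *.
  pose proof (Hball n Hn). pose proof (Hball m Hm). pose proof (sigma_ge0 (x n) (x m)).
  rewrite Rminus_0_r, Rabs_right by lra. lra.
Qed.

Lemma orbit_limit_fixed p : Un_cv (fun n => sigma (x n) p) 0 -> f p = p.
Proof.
  intros Hcv. apply sigma_eq0.
  destruct (Rle_lt_or_eq_dec 0 (sigma (f p) p) (sigma_ge0 _ _)) as [Hpos|]; [|auto].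
  exfalso.
  destruct (Hcv (sigma (f p) p / 2) ltac:(lra)) as [N HN].
  pose proof (HN N (le_n N)) as H1. pose proof (HN (S N) ltac:(lia)) as H2.
  unfold R_dist in H1, H2.
  rewrite Rminus_0_r, Rabs_right in H1, H2 by apply Rle_ge, sigma_ge0.
  pose proof (sigma_image_lt p (x N) (sigma (f p) p / 2) ltac:(lra)
                             ltac:(rewrite sigma_sym; lra)).
  pose proof (sigma_triangle (f p) p (x (S N))).
  rewrite x_succ in *. lra.
Qed.

End Orbit.

Lemma fixed_point_unique p q : f p = p -> f q = q -> p = q.
Proof.
  intros Hp Hq. apply sigma_eq0.
  destruct (Rle_lt_or_eq_dec 0 (sigma p q) (sigma_ge0 _ _)) as [Hpos|]; [|auto].
  pose proof (sigma_image_lt p q (sigma p q) Hpos (Rle_refl _)).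
  rewrite Hp, Hq in *. lra.
Qed.

Theorem gauge_contraction_fixed_point (Y : X -> Prop) :
  inhabited X -> (forall x, Y (f x)) -> ml_complete sigma Y -> exists! p, f p = p.
Proof.
  intros [z] HY Hcomp.
  set (x := fun n => Nat.iter n f (f z)).
  assert (x_succ : forall n, x (S n) = f (x n)) by reflexivity.
  assert (HxY : forall n, Y (x n)) by (intros [|n]; apply HY).
  assert (Hcau : double_limit sigma x 0).
  { apply orbit_double_limit0; [exact x_succ|].
    intros eps He. destruct (sigma_iter_eventually_lt (f z) (f (f z)) eps He) as [N HN].
    exists N. intros n Hn. unfold x. rewrite Nat.iter_succ_r. exact (HN n Hn). }
  destruct (Hcomp x HxY (ex_intro _ 0 Hcau)) as [L [p [HL [_ [_ Hcv]]]]].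
  rewrite (double_limit_unique sigma x L 0 HL Hcau) in Hcv.
  exists p. split; [exact (orbit_limit_fixed x x_succ p Hcv)|].
  intros q Hq. apply fixed_point_unique; [exact (orbit_limit_fixed x x_succ p Hcv) | exact Hq].
Qed.

End ContractionThroughGauge.

Lemma outer_le_subset (A B : R -> Prop) r :
  (forall x, A x -> B x) -> outer_le B r -> outer_le A r.
Proof.
  intros HAB [a [b [H1 [H2 H3]]]]. exists a, b. split; [exact H1|split; [|exact H3]].
  intros x Ax. apply H2, HAB, Ax.
Qed.

Lemma outer_le_weaken (A : R -> Prop) r r' : outer_le A r -> r <= r' -> outer_le A r'.
Proof.
  intros [a [b [H1 [H2 H3]]]] Hr. exists a, b. split; [exact H1|split; [exact H2|]].
  intros N. specialize (H3 N). lra.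
Qed.

Lemma outer_le_nonneg (A : R -> Prop) r : outer_le A r -> 0 <= r.
Proof.
  intros [a [b [H1 [_ H3]]]]. specialize (H3 0%nat). specialize (H1 0%nat). simpl in H3. lra.
Qed.

Lemma outer_le_interval (A : R -> Prop) (a b : R) :
  a <= b -> (forall x, A x -> a <= x <= b) -> outer_le A (b - a + 2).
Proof.
  intros Hab HA.
  exists (fun n => match n with O => a - 1 | _ => 0 end),
         (fun n => match n with O => b + 1 | _ => 0 end).
  split; [|split].
  - intros [|n]; lra.
  - intros x Ax. exists 0%nat. specialize (HA x Ax). lra.
  - intros N. induction N as [|N IH]; simpl in *; lra.
Qed.

(* The measure is the infimum of the admissible covering lengths, obtained as
   minus the supremum of their negatives. *)
Lemma measure_is_exists (A : R -> Prop) (a b : R) :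
  a <= b -> (forall x, A x -> a <= x <= b) -> exists m, measure_is A m.
Proof.
  intros Hab HA.
  set (E := fun y => exists r, outer_le A r /\ y = - r).
  assert (Hbd : bound E).
  { exists 0. intros y [r [Hr ->]]. apply outer_le_nonneg in Hr. lra. }
  assert (Hne : exists y, E y).
  { exists (- (b - a + 2)), (b - a + 2). split; [apply outer_le_interval|]; auto. }
  destruct (completeness E Hbd Hne) as [l [Hub Hlub]].
  exists (- l). split.
  - intros r Hr. assert (E (- r)) by (exists r; auto). specialize (Hub _ H). lra.
  - intros eps Heps.
    destruct (classic (exists r, outer_le A r /\ r < - l + eps)) as [[r [Hr Hlt]]|Hn].
    + apply (outer_le_weaken _ r); [exact Hr|lra].
    + exfalso. assert (is_upper_bound E (l - eps)).
      { intros y [r [Hr ->]]. apply Rnot_lt_le. intro Hgt.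
        apply Hn. exists r. split; [exact Hr|lra]. }
      specialize (Hlub _ H). lra.
Qed.

Lemma measure_is_mono (A B : R -> Prop) m m' :
  (forall x, A x -> B x) -> measure_is A m -> measure_is B m' -> m <= m'.
Proof.
  intros HAB [HA _] [_ HB]. apply Rnot_lt_le. intro Hgt.
  specialize (HB ((m - m') / 2) ltac:(lra)).
  specialize (HA _ (outer_le_subset A B _ HAB HB)). lra.
Qed.

Lemma lower_sum_widen (rho : R -> R) (a b : R) :
  0 <= b -> a <= b ->
  forall prev l v, lower_sum rho a prev l v ->
  exists v', lower_sum rho b prev l v' /\ v <= v'.
Proof.
  intros Hb Hab prev l v H. induction H as [prev|prev s l m v Hlt Hm Hl IH].
  - exists 0. split; [constructor|lra].
  - destruct IH as [v' [Hl' Hv']].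
    destruct (measure_is_exists (superlevel rho b s) 0 b Hb) as [m' Hm'].
    { intros x [Hx _]. exact Hx. }
    exists ((s - prev) * m' + v'). split; [constructor; auto|].
    assert (m <= m').
    { apply (measure_is_mono (superlevel rho a s) (superlevel rho b s)); auto.
      intros x [Hx Hs]. split; [lra|exact Hs]. }
    apply Rplus_le_compat; [apply Rmult_le_compat_l; lra|exact Hv'].
Qed.

Lemma lebesgue_integral_mono (rho : R -> R) a b Ia Ib :
  0 <= b -> a <= b ->
  lebesgue_integral_is rho a Ia -> lebesgue_integral_is rho b Ib -> Ia <= Ib.
Proof.
  intros Hb Hab [_ [_ Happrox]] [_ [Hupper _]]. apply Rnot_lt_le. intro Hgt.
  destruct (Happrox (Ia - Ib)) as [l [v [Hl Hv]]]; [lra|].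
  destruct (lower_sum_widen rho a b Hb Hab 0 l v Hl) as [v' [Hl' Hv']].
  specialize (Hupper _ _ Hl'). lra.
Qed.

Definition integral_up_to (rho : R -> R) (a : R) : R :=
  epsilon (inhabits 0) (fun I => lebesgue_integral_is rho a I).

Lemma integral_up_to_spec rho a :
  Omega rho -> 0 <= a -> lebesgue_integral_is rho a (integral_up_to rho a).
Proof. intros [_ [Hex _]] Ha. unfold integral_up_to. apply epsilon_spec, Hex, Ha. Qed.

Theorem corollary5 (X : Type) (sigma : X -> X -> R) (f : X -> X)
  (Y : X -> Prop) (k : R) (rho : R -> R) :
  metric_like X sigma ->
  (forall x, Y (f x)) ->
  ml_complete sigma Y ->
  0 <= k < 1 ->
  Omega rho ->
  (forall x y I1 I2,
     lebesgue_integral_is rho (sigma (f x) (f y)) I1 ->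
     lebesgue_integral_is rho (sigma x y) I2 ->
     I1 <= k * I2) ->
  exists! x, f x = x.
Proof.
  intros [Hinh [Hs0 [Hs1 [Hsym Htri]]]] HY Hcomp Hk Hrho Hcontr.
  pose proof Hrho as [_ [_ Hint_pos]].
  apply (gauge_contraction_fixed_point X sigma f k (integral_up_to rho)
           Hs0 Hs1 Hsym Htri Hk) with (Y := Y); auto.
  - intros a b Ha Hab.
    apply (lebesgue_integral_mono rho a b); try apply integral_up_to_spec; auto; lra.
  - intros a Ha. apply (Hint_pos a Ha), integral_up_to_spec; auto; lra.
  - intros x y. apply (Hcontr x y); apply integral_up_to_spec; auto.
Qed.
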